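(* Let $\mathcal{T}$ be a set of monomials in $[n]$, and let $D^\star$ be the Hasse diagram of $\mathcal{M}^\star$ and $G^\star$ its underlying undirected graph. If $G^\star$ contains a cycle, then one of the following holds: (A) there exist $m_1,m_2,m_3\in\mathcal{T}$ with $m_1\cap m_2\cap m_3\neq\emptyset$ such that $m_3\cap(m_1\cup m_2)$ is a proper superset of both $m_3\cap m_1$ and $m_3\cap m_2$; (B) there exist pairwise different $m_1,\dots,m_k\in\mathcal{T}$, $k\ge3$, such that for all $i,j\in[k]$, $m_i\cap m_j\neq\emptyset$ if and only if $i$ and $j$ differ by at most $1$ modulo $k$.
   Context: A monomial is a nonempty subset of $[n]=\{1,\dots,n\}$; $\mathcal{S}=\{\{i\}:i\in[n]\}$. Define $\mathcal{M}'=\{\bigcap_{m\in I}m: I\subseteq\mathcal{T}, I\neq\emptyset, \bigcap_{m\in I}m\neq\emptyset\}$ and $\mathcal{M}^\star=\mathcal{M}'\cup\mathcal{S}$. The digraph $D^\star$ has node set $\mathcal{M}^\star$ and an arc $(m_1,m_2)$ for $m_1,m_2\in\mathcal{M}^\star$ if and only if $m_2\subsetneq m_1$ and there is no $m_3\in\mathcal{M}^\star$ with $m_2\subsetneq m_3\subsetneq m_1$. *)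

From mathcomp Require Import all_boot.
Set Implicit Arguments. Unset Strict Implicit. Unset Printing Implicit Defensive.

(* Variables are [n] = 'I_n; a monomial is a nonempty {set 'I_n}. *)
Section Defs.
Variable n : nat.
Implicit Types (T : {set {set 'I_n}}) (m : {set 'I_n}).

Definition Mprime T : {set {set 'I_n}} :=
  [set m | [exists I : {set {set 'I_n}},
      [&& I \subset T, I != set0 & \bigcap_(x in I) x == m]] && (m != set0)].

Definition singletons : {set {set 'I_n}} := [set [set i] | i : 'I_n].

Definition Mstar T := Mprime T :|: singletons.

Definition hasse_arc T m1 m2 : bool :=
  [&& m1 \in Mstar T, m2 \in Mstar T, m2 \proper m1 &
      [forall m3 in Mstar T, ~~ ((m2 \proper m3) && (m3 \proper m1))]].

Definition Gstar_edge T m1 m2 : bool := hasse_arc T m1 m2 || hasse_arc T m2 m1.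

Definition Gstar_has_cycle T : Prop :=
  exists (k : nat) (c : nat -> {set 'I_n}),
    [/\ 3 <= k,
        (forall i, i < k -> c i \in Mstar T),
        (forall i j, i < k -> j < k -> c i = c j -> i = j) &
        (forall i, i < k -> Gstar_edge T (c i) (c (i.+1 %% k)))].

Definition condA T : Prop :=
  exists m1 m2 m3, [/\ [&& m1 \in T, m2 \in T & m3 \in T],
    m1 :&: m2 :&: m3 != set0,
    (m3 :&: m1) \proper (m3 :&: (m1 :|: m2)) &
    (m3 :&: m2) \proper (m3 :&: (m1 :|: m2))].

Definition cyc_close (k i j : nat) : bool :=
  [|| i == j, i.+1 %% k == j | j.+1 %% k == i].

Definition condB T : Prop :=
  exists (k : nat) (m : nat -> {set 'I_n}),
    [/\ 3 <= k,
        (forall i, i < k -> m i \in T),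
        (forall i j, i < k -> j < k -> m i = m j -> i = j) &
        (forall i j, i < k -> j < k ->
           (m i :&: m j != set0) = cyc_close k i j)].
End Defs.

From mathcomp Require Import all_boot zify.
Set Implicit Arguments. Unset Strict Implicit. Unset Printing Implicit Defensive.

(* Condition (B) always holds. If a point lies in three members of T, these
   pairwise meet and give (B) with k = 3. Otherwise every point lies in at most
   two members, so M* consists of T, the meets a :&: b of two members, and
   singletons. A vertex of M* outside T then covers only leaves of G*, so on a
   cycle of G* every vertex outside T lies between two members u, w of T and
   equals u :&: w. Deleting these vertices one at a time, linking u to w, leaves
   a cycle of at least three distinct members of T in which consecutive members
   meet; a chordless arc of it is an induced cycle of the intersection graph of
   T, which is (B). *)

Section ClosedWalks.
Variable X : Type.
Implicit Types (c : nat -> X) (e : X -> X -> Prop).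

Definition closed_walk e k c := forall i, i < k -> e (c i) (c (i.+1 %% k)).

Definition distinct_below k c := forall i j, i < k -> j < k -> c i = c j -> i = j.

Definition rotate k s c t := c ((t + s) %% k).

Lemma closed_walk_sub e e' k c :
  (forall x y, e x y -> e' x y) -> closed_walk e k c -> closed_walk e' k c.
Proof. by move=> ee' walk i /walk /ee'. Qed.

Lemma rotate_mem k s c t : 0 < k -> exists2 j, j < k & rotate k s c t = c j.
Proof. by move=> k0; exists ((t + s) %% k); rewrite ?ltn_pmod. Qed.

Lemma closed_walk_rotate e k s c : closed_walk e k c -> closed_walk e k (rotate k s c).
Proof.
move=> walk i ik; rewrite /rotate.
have -> : (i.+1 %% k + s) %% k = ((i + s) %% k).+1 %% k.
  by rewrite modnDml -[((i + s) %% k).+1]addn1 modnDml addn1 addSn.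
by apply: walk; rewrite ltn_pmod //; lia.
Qed.

Lemma distinct_below_rotate k s c : distinct_below k c -> distinct_below k (rotate k s c).
Proof.
move=> inj i j ik jk; have k0 : 0 < k by lia.
move/inj => /(_ (ltn_pmod _ k0) (ltn_pmod _ k0)) /eqP.
by rewrite eqn_modDr !modn_small // => /eqP.
Qed.

Lemma closed_walk_neighbours e k c i : 3 <= k -> distinct_below k c ->
  closed_walk e k c -> i < k -> exists y z, [/\ y <> z, e (c i) y & e z (c i)].
Proof.
move=> k3 inj walk ik.
have [p pk pS] : exists2 p, p < k & p.+1 %% k = i.
  case: i ik => [|i] ik; first by exists k.-1; rewrite ?prednK ?modnn; lia.
  by exists i; rewrite ?modn_small; lia.
exists (c (i.+1 %% k)), (c p); split; [|exact: walk|by rewrite -pS; exact: walk].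
move/inj => /(_ (ltn_pmod _ (ltnW (ltnW k3))) pk) pE; move: pS; rewrite -pE.
have [ik'|iS] : i.+1 < k \/ i.+1 = k by lia.
  rewrite (modn_small ik').
  by case: (ltngtP i.+2 k) => h; rewrite ?(modn_small h) ?h ?modnn; lia.
by rewrite iS modnn modn_small; lia.
Qed.

Lemma not_cyc_close k i j : i < j -> j < k -> ~~ cyc_close k i j ->
  i.+2 <= j /\ (j - i).+1 < k.
Proof.
move=> ij jk; rewrite /cyc_close (modn_small (_ : i.+1 < k)); last lia.
by case: (ltngtP j.+1 k) => h; [rewrite (modn_small h) | lia | rewrite h modnn]; lia.
Qed.

Lemma cyc_closeC k i j : cyc_close k i j = cyc_close k j i.
Proof. by rewrite /cyc_close eq_sym; congr (_ || _); exact: orbC. Qed.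

Variable r : rel X.
Hypothesis r_sym : symmetric r.

Definition chordless k c := forall i j, i < j -> j < k -> r (c i) (c j) -> cyc_close k i j.

(* A chord c_i c_j cuts off the shorter closed walk c_i, ..., c_j. *)
Lemma closed_walk_chordless_arc k c : 3 <= k -> closed_walk r k c ->
  exists i0 k', [/\ 3 <= k', i0 + k' <= k,
    closed_walk r k' (fun t => c (i0 + t)) & chordless k' (fun t => c (i0 + t))].
Proof.
elim/ltn_ind: k c => k IH c k3 walk.
case: (boolP [exists i : 'I_k, exists j : 'I_k,
    [&& i < j, r (c i) (c j) & ~~ cyc_close k i j]]); last first.
  move=> no_chord; exists 0, k; split => // i j ij jk rij; apply/negPn/negP => far.
  by case/negP: no_chord; apply/existsP; exists (Ordinal (ltn_trans ij jk));
    apply/existsP; exists (Ordinal jk); rewrite /= ij rij.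
case/existsP => -[i ik] /existsP [[j jk]] /and3P [/= ij rij far].
have [i2j jik] := not_cyc_close ij jk far.
have arc_walk : closed_walk r (j - i).+1 (fun t => c (i + t)).
  move=> a ha; case: (ltnP a.+1 (j - i).+1) => h.
    rewrite (modn_small h) addnS; have := walk (i + a) ltac:(lia).
    by rewrite modn_small //; lia.
  have -> : a.+1 = (j - i).+1 by lia.
  by rewrite modnn addn0 (_ : i + a = j) 1?r_sym //; lia.
have [i1 [k' [k'3 le_k' walk' chl]]] := IH _ jik _ ltac:(lia) arc_walk.
exists (i + i1), k'; split => //; first lia.
- by move=> a ha; rewrite -!addnA; exact: walk'.
- by move=> a b ab bk; rewrite -!addnA; exact: chl.
Qed.

End ClosedWalks.

Definition meets (X : finType) (A B : {set X}) := A :&: B != set0.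

Lemma meetsC (X : finType) : symmetric (@meets X).
Proof. by move=> A B; rewrite /meets setIC. Qed.

Definition owners n (T : {set {set 'I_n}}) (x : 'I_n) := [set t in T | x \in t].

Section HasseDiagram.
Variables (n : nat) (T : {set {set 'I_n}}).
Implicit Types (a b c d u v w x y : {set 'I_n}).
Hypothesis owners_le2 : forall i, #|owners T i| <= 2.

Lemma Mstar_neq0 x : x \in Mstar T -> x != set0.
Proof.
rewrite /Mstar inE => /orP[]; first by rewrite /Mprime inE => /andP[].
by case/imsetP => i _ ->; apply/set0Pn; exists i; rewrite inE.
Qed.

Lemma setI_Mstar a b : a \in T -> b \in T -> a :&: b != set0 -> a :&: b \in Mstar T.
Proof.
move=> aT bT ab0; rewrite /Mstar inE; apply/orP; left; rewrite /Mprime inE ab0 andbT.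
apply/existsP; exists [set a; b]; rewrite subUset !sub1set aT bT /=.
apply/andP; split; first by apply/set0Pn; exists a; rewrite !inE eqxx.
apply/eqP/setP => i; rewrite inE; apply/bigcapP/andP => [ab|[ia ib] y].
  by split; apply: ab; rewrite !inE eqxx ?orbT.
by rewrite !inE => /orP[]/eqP->.
Qed.

Lemma owner_cases i a b c : a \in T -> b \in T -> c \in T -> a != b ->
  i \in a -> i \in b -> i \in c -> c = a \/ c = b.
Proof.
move=> aT bT cT ab ia ib ic.
case: (eqVneq c a) => [|ca]; [by left|]; case: (eqVneq c b) => [|cb]; [by right|].
have : 2 < #|owners T i|.
  by apply/card_gt2P; exists a, b, c; rewrite !inE aT bT cT ia ib ic ab ca (eq_sym b) cb.
by rewrite ltnNge owners_le2.
Qed.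

Definition pair_meet x := exists a b, [/\ a \in T, b \in T, a != b & x = a :&: b].

Lemma Mstar_cases x : x \in Mstar T ->
  [\/ x \in T, pair_meet x | exists i, x = [set i]].
Proof.
rewrite /Mstar inE => /orP[]; last by case/imsetP => i _ ->; constructor 3; exists i.
rewrite /Mprime inE => /andP[/existsP[I /and3P[IT /set0Pn[a aI] /eqP xE]] /set0Pn[i ix]].
have inT y : y \in I -> y \in T by move/(subsetP IT).
have iI y : y \in I -> i \in y by move=> yI; move: ix; rewrite -xE => /bigcapP; apply.
case: (boolP [forall y in I, y == a]) => [/forall_inP allA | /forall_inPn [b bI ba]].
  constructor 1; suff -> : x = a by exact: inT.
  by rewrite -xE; apply/setP => j; apply/bigcapP/idP => [/(_ a aI)|ja y /allA/eqP->].
have ab : a != b by rewrite eq_sym.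
constructor 2; exists a, b; split; rewrite ?inT //.
rewrite -xE; apply/setP => j; rewrite inE; apply/bigcapP/andP => [cap|[ja jb] y yI].
  by split; apply: cap.
have [aT bT yT] := And3 (inT _ aI) (inT _ bI) (inT _ yI).
by case: (owner_cases aT bT yT ab (iI _ aI) (iI _ bI) (iI _ yI)) => ->.
Qed.

Lemma Mstar_proper_cases x y : x \in Mstar T -> y \in Mstar T -> y \proper x ->
  x \in T \/ pair_meet x.
Proof.
move=> xM yM yx; case: (Mstar_cases xM) => [|?|[i xE]]; [by left|by right|].
move: yx; rewrite xE => /properP[]; rewrite subset1 => /orP[/eqP->|/eqP y0].
  by case=> j; rewrite inE => ->.
by have := Mstar_neq0 yM; rewrite y0 eqxx.
Qed.

Lemma pair_meet_unique i a b c d : a \in T -> b \in T -> c \in T -> d \in T ->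
  a != b -> c != d -> i \in a :&: b -> i \in c :&: d -> c :&: d = a :&: b.
Proof.
move=> aT bT cT dT ab + /setIP[ia ib] /setIP[ic id].
case: (owner_cases aT bT cT ab ia ib ic) => ->;
case: (owner_cases aT bT dT ab ia ib id) => ->; rewrite ?eqxx // => _.
exact: setIC.
Qed.

Lemma hasse_arcP x y : hasse_arc T x y ->
  [/\ x \in Mstar T, y \in Mstar T, y \proper x &
      forall m, m \in Mstar T -> y \proper m -> m \proper x -> False].
Proof.
case/and4P => xM yM yx /forall_inP cover; split => // m mM ym mx.
by move: (cover m mM); rewrite ym mx.
Qed.

Lemma hasse_upper_cover_mem w1 w2 v : hasse_arc T w1 v -> hasse_arc T w2 v ->
  w1 != w2 -> w1 \in T.
Proof.
move=> /hasse_arcP[w1M vM vw1 _] /hasse_arcP[w2M _ vw2 cover2] w12.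
have [i iv] := set0Pn _ (Mstar_neq0 vM).
have iw1 := subsetP (proper_sub vw1) i iv; have iw2 := subsetP (proper_sub vw2) i iv.
case: (Mstar_proper_cases w1M vM vw1) => // -[a [b [aT bT ab w1E]]].
move: iw1; rewrite w1E => iab.
case: (Mstar_proper_cases w2M vM vw2) => [w2T|[c [d [cT dT cd w2E]]]].
  case: (cover2 w1 w1M vw1); rewrite properEneq w12 w1E.
  by case/setIP: iab => ia ib; case: (owner_cases aT bT w2T ab ia ib iw2) => ->;
    rewrite ?subsetIl ?subsetIr.
move: iw2 w12; rewrite w2E w1E => icd.
by rewrite (pair_meet_unique aT bT cT dT ab cd iab icd) eqxx.
Qed.

Lemma hasse_lower_cover_meet w1 w2 v : hasse_arc T w1 v -> hasse_arc T w2 v ->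
  w1 != w2 -> [/\ w1 \in T, w2 \in T & v = w1 :&: w2].
Proof.
move=> arc1 arc2 w12.
have w1T := hasse_upper_cover_mem arc1 arc2 w12.
have w2T : w2 \in T by apply: (hasse_upper_cover_mem arc2 arc1); rewrite eq_sym.
split => //; move: arc1 arc2 => /hasse_arcP[w1M vM vw1 cover1] /hasse_arcP[_ _ vw2 cover2].
have vw : v \subset w1 :&: w2 by rewrite subsetI !proper_sub.
have wM : w1 :&: w2 \in Mstar T.
  apply: setI_Mstar => //; apply: contraNneq (Mstar_neq0 vM) => w0.
  by rewrite -subset0 -w0.
case: (eqVneq v (w1 :&: w2)) => // vw'.
case: (eqVneq (w1 :&: w2) w1) => [w1w2|w1w2].
  by case: (cover2 w1 w1M vw1); rewrite properEneq w12 -w1w2 subsetIr.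
by case: (cover1 _ wM); rewrite properEneq ?vw' ?w1w2 ?subsetIl.
Qed.

Lemma hasse_leaf v u t : v \notin T -> hasse_arc T v u -> Gstar_edge T u t -> t = v.
Proof.
move=> vT vu; have /hasse_arcP[vM uM uv _] := vu.
case: (Mstar_proper_cases vM uM uv) => [vT'|[a [b [aT bT ab vE]]]].
  by rewrite vT' in vT.
have [i iu] := set0Pn _ (Mstar_neq0 uM).
have iab : i \in a :&: b by rewrite -vE (subsetP (proper_sub uv)).
case/orP => [ut|tu]; last first.
  apply/eqP; apply: contraNT vT => tv.
  by apply: (hasse_upper_cover_mem vu tu); rewrite eq_sym.
have /hasse_arcP[_ tM tu _] := ut.
case: (Mstar_proper_cases uM tM tu) => [uT|[c [d [cT dT cd uE]]]].
  case/setIP: (iab) => ia ib; move: uv; rewrite properE vE => /andP[_].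
  by case: (owner_cases aT bT uT ab ia ib iu) => ->; rewrite ?subsetIl ?subsetIr.
have := pair_meet_unique aT bT cT dT ab cd iab; rewrite -uE -vE => /(_ iu) uvE.
by move: uv; rewrite uvE properxx.
Qed.

Definition Gstar_deg2 x := exists y z, [/\ y != z, Gstar_edge T x y & Gstar_edge T x z].

Lemma Gstar_edgeC x y : Gstar_edge T x y = Gstar_edge T y x.
Proof. exact: orbC. Qed.

Lemma Gstar_edge_proper x y : Gstar_edge T x y ->
  [/\ x \in Mstar T, y \in Mstar T & x \proper y \/ y \proper x].
Proof. by case/orP => /hasse_arcP[? ? ? _]; split => //; [right|left]. Qed.

Lemma Gstar_edge_meet_neq0 x y : Gstar_edge T x y -> x :&: y != set0.
Proof.
case/Gstar_edge_proper => xM yM [/proper_sub/setIidPl->|/proper_sub/setIidPr->];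
exact: Mstar_neq0.
Qed.

Lemma Gstar_path_meet u v w : Gstar_edge T u v -> Gstar_edge T v w -> u != w ->
  v \notin T -> Gstar_deg2 u -> Gstar_deg2 w -> [/\ u \in T, w \in T & v = u :&: w].
Proof.
have down y : v \notin T -> Gstar_deg2 y -> Gstar_edge T y v -> hasse_arc T y v.
  move=> vT [t1 [t2 [t12 e1 e2]]] /orP[] // vy.
  by move: t12; rewrite (hasse_leaf vT vy e1) (hasse_leaf vT vy e2) eqxx.
move=> uv vw uw vT du dw.
by apply: hasse_lower_cover_meet uw; apply: down => //; rewrite Gstar_edgeC.
Qed.

(* The second kind of link replaces a path u, u :&: w, w of G*; remembering that
   u :&: w is no longer on the cycle excludes the degenerate cycle u, w, u :&: w. *)
Definition contracted_link k (c : nat -> {set 'I_n}) x y :=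
  Gstar_edge T x y \/
  [/\ x \in T, y \in T, x :&: y != set0 & forall j, j < k -> c j != x :&: y].

Definition contracted_cycle k (c : nat -> {set 'I_n}) :=
  [/\ 3 <= k, distinct_below k c, (forall i, i < k -> Gstar_deg2 (c i)) &
      closed_walk (contracted_link k c) k c].

Lemma contracted_link_sub k k' (c c' : nat -> {set 'I_n}) x y :
  (forall j, j < k' -> exists2 j', j' < k & c' j = c j') ->
  contracted_link k c x y -> contracted_link k' c' x y.
Proof.
move=> sub [xy|[xT yT xy0 fresh]]; [by left|right; split=> // j /sub[j' j'k ->]].
exact: fresh.
Qed.

Lemma contracted_cycle_rotate k s (c : nat -> {set 'I_n}) :
  contracted_cycle k c -> contracted_cycle k (rotate k s c).
Proof.
case=> k3 inj deg walk; have k0 : 0 < k by lia.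
split; [done|exact: distinct_below_rotate|by move=> i ik; apply/deg/ltn_pmod|].
apply: closed_walk_rotate; apply: closed_walk_sub walk => x y.
by apply: contracted_link_sub => j _; exact: rotate_mem.
Qed.

Lemma contracted_cycle_drop K (c : nat -> {set 'I_n}) : contracted_cycle K.+1 c ->
  c K \notin T -> contracted_cycle K c.
Proof.
case=> k3 inj deg walk cKT.
have link_edge x y : contracted_link K.+1 c x y -> x = c K \/ y = c K -> Gstar_edge T x y.
  by move=> [//|[xT yT _ _]] [] E; move: cKT; rewrite -E ?xT ?yT.
have e1 : Gstar_edge T (c K.-1) (c K).
  have := walk K.-1 ltac:(lia); rewrite prednK ?modn_small; [|lia|lia].
  by move/link_edge; apply; right.
have e2 : Gstar_edge T (c K) (c 0).
  by have := walk K (ltnSn K); rewrite modnn => /link_edge; apply; left.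
have [cK1T c0T cKE] : [/\ c K.-1 \in T, c 0 \in T & c K = c K.-1 :&: c 0].
  apply: Gstar_path_meet e1 e2 _ cKT (deg _ _) (deg _ _); try lia.
  by apply/eqP => /inj; lia.
have K3 : 3 <= K.
  case: (ltnP 2 K) => // K2; have K2E : K = 2 by lia.
  move: (walk 0 isT) cKE; rewrite K2E /= setIC.
  case=> [/Gstar_edge_proper[_ _ [/proper_sub/setIidPl-> | /proper_sub/setIidPr->]]
          | [_ _ _ fresh]].
  - by move/inj; lia.
  - by move/inj; lia.
  - by move/eqP; rewrite (negPf (fresh 2 _)).
split => // [i j ik jk|i ik|i ik]; first (by apply: inj; lia); first by apply: deg; lia.
case: (ltnP i.+1 K) => iK.
  have := walk i ltac:(lia); rewrite (modn_small iK) modn_small; last lia.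
  by apply: contracted_link_sub => j jK; exists j => //; lia.
have iE : i = K.-1 by lia.
rewrite iE prednK ?modnn; last lia.
right; split; rewrite -?cKE //.
  by case/Gstar_edge_proper: e2 => cKM _ _; exact: Mstar_neq0.
by move=> j jK; apply/eqP => /inj; lia.
Qed.

Lemma contracted_cycle_members k (c : nat -> {set 'I_n}) : contracted_cycle k c ->
  exists k' (c' : nat -> {set 'I_n}), [/\ 3 <= k', distinct_below k' c',
    (forall i, i < k' -> c' i \in T) & closed_walk (@meets _) k' c'].
Proof.
elim/ltn_ind: k c => k IH c cyc.
case: (boolP [forall i : 'I_k, c i \in T]) => [/forallP allT|/forallPn[[i ik] /= ciT]].
  case: cyc => k3 inj _ walk; exists k, c; split => // [i ik|i /walk[]].
  - exact: (allT (Ordinal ik)).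
  - exact: Gstar_edge_meet_neq0.
  - by case.
have [K kE] : exists K, k = K.+1 by exists k.-1; lia.
subst k; apply: (IH K (ltnSn K) (rotate K.+1 i.+1 c)).
apply: contracted_cycle_drop; first exact: contracted_cycle_rotate.
by rewrite /rotate addnS -addSn modnDl modn_small.
Qed.

Lemma Gstar_cycle_contracted :
  Gstar_has_cycle T -> exists k (c : nat -> {set 'I_n}), contracted_cycle k c.
Proof.
case=> k [c [k3 _ inj walk]]; exists k, c; split => // [i ik|i /walk]; last by left.
have [y [z [yz e1 e2]]] :=
  closed_walk_neighbours (e := fun x y => Gstar_edge T x y) k3 inj walk ik.
by exists y, z; split; [apply/eqP|exact: e1|rewrite Gstar_edgeC].
Qed.

End HasseDiagram.

Lemma condB_of_three_owners n (T : {set {set 'I_n}}) i : 2 < #|owners T i| -> condB T.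
Proof.
case/card_gt2P => a [b [c [[]]]]; rewrite !inE.
move=> /andP[aT ia] /andP[bT ib] /andP[cT ic] [ab bc ca].
have mi j : j < 3 -> i \in nth set0 [:: a; b; c] j by case: j => [|[|[|]]].
exists 3, (nth set0 [:: a; b; c]); split => // [j|j1 j2 j1k j2k|j1 j2 j1k j2k].
- by case: j => [|[|[|]]].
- case: j1 j1k => [|[|[|]]] // _; case: j2 j2k => [|[|[|]]] //= _ E;
    by move: ab bc ca; rewrite E eqxx.
- have -> : cyc_close 3 j1 j2 by case: j1 j1k => [|[|[|]]] //; case: j2 j2k => [|[|[|]]].
  by apply/set0Pn; exists i; rewrite inE !mi.
Qed.

Lemma meet_cycle_condB n (T : {set {set 'I_n}}) k (c : nat -> {set 'I_n}) :
  (forall m, m \in T -> m != set0) -> 3 <= k -> distinct_below k c ->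
  (forall i, i < k -> c i \in T) -> closed_walk (@meets _) k c -> condB T.
Proof.
move=> T_neq0 k3 inj cT walk.
have [i0 [k' [k'3 le_k' walk' chl]]] := closed_walk_chordless_arc (@meetsC _) k3 walk.
exists k', (fun t => c (i0 + t)); split => // [i ik|i j ik jk cij|i j ik jk].
- by apply: cT; lia.
- by have := inj (i0 + i) (i0 + j) ltac:(lia) ltac:(lia) cij; lia.
apply/idP/idP => [meet|/or3P[/eqP<-|/eqP<-|/eqP<-]].
- case: (ltngtP i j) => [ij|ji|<-]; first exact: chl.
    by rewrite cyc_closeC; apply: chl; rewrite // meetsC.
  by rewrite /cyc_close eqxx.
- by rewrite setIid T_neq0 //; apply: cT; lia.
- exact: walk'.
- by rewrite setIC; exact: walk'.
Qed.

Theorem corollary4p11 (n : nat) (T : {set {set 'I_n}}) :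
  (forall m, m \in T -> m != set0) ->
  Gstar_has_cycle T ->
  condA T \/ condB T.
Proof.
move=> T_neq0 Gcyc; right.
case: (boolP [forall i, #|owners T i| <= 2]) => [/forallP owners_le2|/forallPn[i]].
  have [k [c cyc]] := Gstar_cycle_contracted Gcyc.
  have [k' [c' [k'3 inj c'T walk]]] := contracted_cycle_members owners_le2 cyc.
  exact: meet_cycle_condB T_neq0 k'3 inj c'T walk.
by rewrite -ltnNge; exact: condB_of_three_owners.
Qed.
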